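(* For every positive integer $k$, as formal power series in $q$, $$\sum_{n\ge 1}\mathrm{spt}k_d(n)\,q^n=P_k(q)\,(-q;q)_\infty+(-1)^k (q;q)_{k-1},$$ where the polynomials $P_k(q)$ are defined by $P_1(q)=1$ and $P_k(q)=(q^{k-1}-1)P_{k-1}(q)+q^{k-1}$ for $k>1$.
   Context: For a partition $\pi$, $s(\pi)$ denotes its smallest part. $\mathrm{Spt}k_d(n)$ is the set of partitions $\pi$ of $n$ in which the smallest part $s(\pi)$ occurs exactly $k$ times and all remaining parts (those larger than $s(\pi)$) are pairwise distinct; $\mathrm{spt}k_d(n)=|\mathrm{Spt}k_d(n)|$. Notation: $(a;q)_0=1$, $(a;q)_n=\prod_{j=0}^{n-1}(1-aq^j)$, $(a;q)_\infty=\prod_{j\ge 0}(1-aq^j)$. *)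

From HB Require Import structures.
From mathcomp Require Import all_boot all_order all_algebra.
Set Implicit Arguments. Unset Strict Implicit. Unset Printing Implicit Defensive.
Import Order.TTheory GRing.Theory Num.Theory.

(* A partition of n is encoded by its multiplicity function:
   m i = number of occurrences of the part (i+1), for i < n.
   (Each multiplicity is at most n, so 'I_n.+1 suffices.) *)
Definition mults (n : nat) := {ffun 'I_n -> 'I_n.+1}.

Definition weight (n : nat) (m : mults n) : nat := \sum_(i < n) (i.+1 * m i).

Definition is_smallest (n : nat) (m : mults n) (s : 'I_n) : bool :=
  (0 < m s) && [forall j : 'I_n, (j < s) ==> (m j == 0 :> nat)].

Definition Sptkd (k n : nat) : {set mults n} :=
  [set m : mults n | (weight m == n) &&
     [exists s : 'I_n, [&& is_smallest m s, (m s == k :> nat) &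
        [forall j : 'I_n, (s < j) ==> (m j <= 1)]]]].

Definition sptkd (k n : nat) : nat := #|Sptkd k n|.

Local Open Scope ring_scope.

Fixpoint Ppoly (k : nat) : {poly int} :=
  match k with
  | 0 => 0
  | k'.+1 => if k' == 0%N then 1 else ('X^k' - 1) * Ppoly k' + 'X^k'
  end.

Definition qq_poch (n : nat) : {poly int} := \prod_(j < n) (1 - 'X^(j.+1)).

(* (-q;q)_N = prod_{j=1}^{N} (1 + q^j); its coefficient of q^n agrees with
   that of the infinite product (-q;q)_oo as soon as N >= n. *)
Definition mq_poch (N : nat) : {poly int} := \prod_(j < N) (1 + 'X^(j.+1)).

From mathcomp Require Import all_boot all_order all_algebra ring.
Import GRing.Theory.

Set Implicit Arguments.
Unset Strict Implicit.
Unset Printing Implicit Defensive.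

(* Sorting the partitions of Sptk_d(n) by their smallest part t, those with
   smallest part t have generating function q^(tk) (-q^(t+1);q)_oo, so the
   series is G_k = sum_(t >= 1) q^(tk) (-q^(t+1);q)_oo.  Since
   (1 + q^t) (-q^(t+1);q)_oo = (-q^t;q)_oo, the series satisfies
   G_(k+1) = (q^k - 1) G_k + q^k (-q;q)_oo, which is the recurrence of P_k
   together with (-1)^(k+1) (q;q)_k = (q^k - 1) (-1)^k (q;q)_(k-1); induction
   on k concludes.  Working with polynomials, the products are truncated at
   q^n, which only perturbs coefficients of degree > n. *)

Definition sptk_mult (k s i j : nat) : bool :=
  if (i < s)%N then j == 0%N else if i == s then j == k else (j <= 1)%N.

Definition Sptkd_at (k n : nat) (s : 'I_n) : {set mults n} :=
  [set m : mults n | (weight m == n) && [forall i : 'I_n, sptk_mult k s i (m i)]].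

Section SplitBySmallestPart.

Variables (k n : nat).
Hypothesis k_gt0 : (0 < k)%N.

Lemma sptk_condE (m : mults n) (s : 'I_n) :
  [&& is_smallest m s, (m s == k :> nat) & [forall j : 'I_n, (s < j) ==> (m j <= 1)]]
  = [forall i : 'I_n, sptk_mult k s i (m i)].
Proof.
apply/idP/forallP.
- case/and3P => /andP[_ /forallP below] /eqP ms_k /forallP above i; rewrite /sptk_mult.
  case: (ltngtP i s) => [lt_is | lt_si | /val_inj->]; last by rewrite ms_k.
  + by have := below i; rewrite lt_is.
  + by have := above i; rewrite lt_si.
- move=> ok; have := ok s; rewrite /sptk_mult ltnn eqxx => /eqP ms_k.
  apply/and3P; split; last 2 first.
  + by rewrite ms_k.
  + apply/forallP => j; apply/implyP => lt_sj.
    by have := ok j; rewrite /sptk_mult ltnNge (ltnW lt_sj) (gtn_eqF lt_sj).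
  rewrite /is_smallest ms_k k_gt0; apply/forallP => j; apply/implyP => lt_js.
  by have := ok j; rewrite /sptk_mult lt_js.
Qed.

(* The smallest part is determined because it occurs k > 0 times. *)
Lemma sptk_mult_inj (m : mults n) (s s' : 'I_n) :
  [forall i : 'I_n, sptk_mult k s i (m i)] ->
  [forall i : 'I_n, sptk_mult k s' i (m i)] -> s = s'.
Proof.
move=> /forallP ok /forallP ok'.
have := ok s; have := ok' s'; rewrite /sptk_mult !ltnn !eqxx => /eqP ms'_k /eqP ms_k.
case: (ltngtP s s') => [lt_ss' | lt_s's | /val_inj //].
- by have := ok' s; rewrite /sptk_mult lt_ss' ms_k eqn0Ngt k_gt0.
- by have := ok s'; rewrite /sptk_mult lt_s's ms'_k eqn0Ngt k_gt0.
Qed.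

Lemma sptkd_sum_at : sptkd k n = \sum_(s < n) #|Sptkd_at k s|.
Proof.
rewrite /sptkd -sum1_card.
under [RHS]eq_bigr => s _ do rewrite -sum1_card big_mkcond /=.
rewrite exchange_big big_mkcond /=; apply: eq_bigr => m _.
have [inS | notinS] := boolP (m \in Sptkd k n).
- move: (inS); rewrite inE => /andP[wm /existsP[s0]]; rewrite sptk_condE => ok0.
  rewrite (bigD1 s0) //= inE wm ok0 big1 // => s ne_s_s0; rewrite inE.
  case: (boolP (_ && _)) => // /andP[_ ok].
  by rewrite (sptk_mult_inj ok ok0) eqxx in ne_s_s0.
- rewrite big1 // => s _; rewrite inE; case: (boolP (_ && _)) => // /andP[wm ok].
  by move: notinS; rewrite inE wm /=; case/existsP; exists s; rewrite sptk_condE.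
Qed.

End SplitBySmallestPart.

Local Open Scope ring_scope.

Definition mults_gf (n : nat) (P : 'I_n -> nat -> bool) : {poly int} :=
  \prod_(i < n) \sum_(j < n.+1) (if P i j then 'X^(i.+1 * j) else 0).

Lemma card_mults_coef (n : nat) (P : 'I_n -> nat -> bool) :
  #|[set m : mults n | (weight m == n) && [forall i, P i (m i)]]|%:Z
  = (mults_gf P)`_n.
Proof.
rewrite /mults_gf bigA_distr_bigA /= coef_sum.
have coef_term (m : mults n) :
    (\prod_i (if P i (m i) then 'X^(i.+1 * m i) else 0 : {poly int}))`_n
    = if m \in [set m : mults n | (weight m == n) && [forall i, P i (m i)]] then 1 else 0.
  rewrite inE; case: (boolP [forall i, P i (m i)]) => [ok | /forallPn[i not_ok]].
  - rewrite (eq_bigr (fun i : 'I_n => 'X^(i.+1 * m i))) => [|i _]; last by rewrite (forallP ok i).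
    by rewrite prodrXr coefXn andbT eq_sym; case: (_ == n).
  - by rewrite (bigD1 i) //= (negbTE not_ok) mul0r coef0 andbF.
by rewrite (eq_bigr _ (fun m _ => coef_term m)) -big_mkcond sumr_const -natz.
Qed.

Lemma coef_signM (R : nzRingType) (p : {poly R}) (k i : nat) :
  ((-1) ^+ k * p)`_i = (-1) ^+ k * p`_i.
Proof.
elim: k => [|k IHk]; first by rewrite !expr0 !mul1r.
by rewrite !exprS -!mulrA !mulN1r coefN IHk.
Qed.

Definition mq_tail (n t : nat) : {poly int} := \prod_(t <= j < n) (1 + 'X^(j.+1)).

Lemma mq_tail0 (n : nat) : mq_tail n 0 = mq_poch n.
Proof. by rewrite /mq_tail big_mkord. Qed.

Lemma mq_tailS (n t : nat) : (t < n)%N -> mq_tail n t = (1 + 'X^(t.+1)) * mq_tail n t.+1.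
Proof. by move=> lt_tn; rewrite /mq_tail big_ltn. Qed.

(* The truncation of the series G_k. *)
Definition sptk_gf (k n : nat) : {poly int} :=
  \sum_(t < n) 'X^(t.+1 * k) * mq_tail n t.+1.

Lemma sptk_gfS (k n : nat) :
  sptk_gf k.+1 n = ('X^k - 1) * sptk_gf k n + 'X^k * mq_poch n - 'X^(n.+1 * k).
Proof.
have shift : \sum_(t < n) 'X^(t * k) * mq_tail n t = mq_poch n + sptk_gf k n - 'X^(n * k).
  rewrite /sptk_gf; case: n => [|n].
    by rewrite /mq_poch !big_ord0 mul0n expr0 addr0 subrr.
  rewrite big_ord_recl big_ord_recr /= mul0n expr0 mul1r mq_tail0 /mq_tail big_geq //.
  rewrite mulr1 -/(mq_tail _ _); ring.
have peel : sptk_gf k.+1 n = 'X^k * \sum_(t < n) 'X^(t * k) * mq_tail n t - sptk_gf k n.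
  rewrite /sptk_gf mulr_sumr -sumrB; apply: eq_bigr => t _.
  rewrite (mq_tailS (ltn_ord t)) mulnS mulSn !exprD; ring.
rewrite peel shift mulSn exprD; ring.
Qed.

Lemma PpolySS (k : nat) : Ppoly k.+2 = ('X^(k.+1) - 1) * Ppoly k.+1 + 'X^(k.+1).
Proof. by []. Qed.

Lemma qq_pochS (k : nat) : qq_poch k.+1 = qq_poch k * (1 - 'X^(k.+1)).
Proof. by rewrite /qq_poch big_ord_recr. Qed.

Lemma sptk_gf_congr (k n : nat) : (0 < k)%N -> exists r : {poly int},
  sptk_gf k n = Ppoly k * mq_poch n + (-1) ^+ k * qq_poch k.-1 + 'X^(n.+1) * r.
Proof.
elim: k => // -[_ _ | k IHk _].
  by exists 0; rewrite sptk_gfS /qq_poch big_ord0 /= muln0 expr0 subrr mul0r; ring.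
have [r gfE] := IHk isT.
exists (('X^(k.+1) - 1) * r - 'X^(n.+1 * k)).
rewrite sptk_gfS gfE PpolySS qq_pochS mulnS exprD [(-1) ^+ k.+2]exprS /=; ring.
Qed.

(* A multiplicity k > n cannot be encoded in [mults n], hence the test [k <= n]. *)
Definition sptk_factor (k n s i : nat) : {poly int} :=
  if (i < s)%N then 1 else if i == s then (if (k <= n)%N then 'X^(s.+1 * k) else 0)
  else 1 + 'X^(i.+1).

Lemma sptk_mult_factor (k n : nat) (s i : 'I_n) :
  \sum_(j < n.+1) (if sptk_mult k s i j then 'X^(i.+1 * j) else 0) = sptk_factor k n s i.
Proof.
have n_gt0 : (0 < n)%N by apply: leq_ltn_trans (ltn_ord i).
rewrite /sptk_mult /sptk_factor; case: ltngtP => [lt_is | lt_si | /val_inj->].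
- rewrite (bigD1 ord0) //= big1 => [|j ne_j0]; first by rewrite muln0 addr0.
  by case: eqP => // j0; case/eqP: ne_j0; apply: val_inj.
- rewrite (bigD1 ord0) //= (bigD1 (Ordinal (n_gt0 : (1 < n.+1)%N))) //= big1.
    by rewrite muln0 muln1 addr0.
  by case=> -[|[|j]] lt_j.
- case: (ltnP k n.+1) => [lt_kn | le_nk].
    rewrite (bigD1 (Ordinal lt_kn)) //= big1 => [|j ne_jk].
      by rewrite eqxx addr0 -ltnS lt_kn.
    by case: eqP => // jk; case/eqP: ne_jk; apply: val_inj.
  rewrite leqNgt le_nk big1 // => j _; case: eqP => // jk.
  by move: (ltn_ord j); rewrite jk ltnNge le_nk.
Qed.

Lemma card_Sptkd_at (k n : nat) (s : 'I_n) :
  #|Sptkd_at k s|%:Z = ('X^(s.+1 * k) * mq_tail n s.+1)`_n.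
Proof.
rewrite (card_mults_coef (fun i : 'I_n => sptk_mult k s i)).
pose F := sptk_factor k n s.
rewrite /mults_gf (eq_bigr (fun i : 'I_n => F i)) => [|i _]; last exact: sptk_mult_factor.
rewrite -(big_mkord xpredT F) (@big_cat_nat _ _ _ s 0 n _ F (leq0n s) (ltnW (ltn_ord s))) /=.
rewrite big_nat_cond big1 => [|i /andP[/andP[_ lt_is] _]]; last by rewrite /F /sptk_factor lt_is.
rewrite mul1r big_ltn // {1}/F /sptk_factor ltnn eqxx.
rewrite (eq_big_nat _ _ (F2 := fun j => 1 + 'X^(j.+1))).
  case: leqP => // lt_nk.
  by rewrite mul0r coef0 coefXnM (leq_trans lt_nk (leq_pmull _ _)).
by move=> i /andP[lt_si _]; rewrite /F /sptk_factor ltnNge (ltnW lt_si) (gtn_eqF lt_si).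
Qed.

Theorem theorem1 (k : nat) (hk : (0 < k)%N) (n : nat) :
  ((if n == 0%N then 0%N else sptkd k n)%:Z : int) =
    (Ppoly k * mq_poch n)`_n + (-1) ^+ k * (qq_poch k.-1)`_n.
Proof.
have [r gfE] := @sptk_gf_congr k n hk.
have <- : (sptk_gf k n)`_n = (Ppoly k * mq_poch n)`_n + (-1) ^+ k * (qq_poch k.-1)`_n.
  by rewrite gfE !coefD coefXnM ltnSn addr0 coef_signM.
have -> : (if n == 0%N then 0%N else sptkd k n) = sptkd k n.
  by case: n {r gfE} => //; rewrite (@sptkd_sum_at k 0 hk) big_ord0.
rewrite (@sptkd_sum_at k n hk) -natz natr_sum /sptk_gf coef_sum.
by apply: eq_bigr => s _; rewrite natz card_Sptkd_at.
Qed.
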